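(* Let $\{\mathcal S,\mathcal C,\mathcal R,\mathcal K(t)\}$ with $\mathcal S=\{S_1,\dots,S_N\}$ be a weakly reversible non-autonomous mass-action system with bounded kinetics, and let $D\subset\mathbb R^N_{>0}$. Then at least one of the following holds. (C1) There exists $M>0$ such that for every $x\in D$ having $x_i>M$ or $x_i<1/M$ for at least one $i\in\{1,\dots,N\}$, $$\sum_k\kappa_k(t)\,x^{y_k}(y_k'-y_k)\cdot\ln(x)<0\quad\text{for all }t\ge0.$$ (C2) There exists a sequence $\{x_n\}\subset D$ with $\lim_{n\to\infty}x_{n,i}\in\{0,\infty\}$ for at least one $i$, such that $\mathcal C$ is partitioned along $\{x_n\}$ with tiers $T_1,\dots,T_P$ and some constant $C$, and $T_1$ is a union of linkage classes.
   Context: A chemical reaction network on species $S_1,\dots,S_N$ consists of a finite set $\mathcal C\subset\mathbb Z^N_{\ge0}$ of complexes and a finite set $\mathcal R$ of reactions $y\to y'$ with $y,y'\in\mathcal C$, $y\ne y'$, such that every species has positive coefficient in some complex and every complex appears in some reaction. Reactions are enumerated $y_k\to y_k'$, $k=1,\dots,|\mathcal R|$. The reaction diagram is the directed graph with vertex set $\mathcal C$ and an edge $y\to y'$ for each reaction; its connected components are the linkage classes. $T\subset\mathcal C$ is a union of linkage classes if it is the union of the complex sets of some nonempty collection of linkage classes. The network is weakly reversible if each linkage class is strongly connected. A non-autonomous mass-action system with bounded kinetics is such a network together with functions $\kappa_k:[0,\infty)\to\mathbb R$ and a constant $\eta>0$ with $\eta<\kappa_k(t)<1/\eta$ for all $t\ge0$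 and all $k$, with dynamics $\dot x(t)=\sum_k\kappa_k(t)x(t)^{y_k}(y_k'-y_k)$. For $u\in\mathbb R^N_{\ge0}$, $v\in\mathbb R^N$, $u^v=\prod_iu_i^{v_i}$ ($0^0=1$); $\ln(x)=(\ln x_1,\dots,\ln x_N)$. $\mathcal C$ is partitioned along $\{x_n\}$ if there exist a partition $\{T_i\}_{i=1}^P$ of $\mathcal C$ into nonempty disjoint tiers and $C>1$ such that (i) $y_j,y_k\in T_i$ implies $\frac1Cx_n^{y_j}\le x_n^{y_k}\le Cx_n^{y_j}$ for all $n$, and (ii) $y_j\in T_i$, $y_k\in T_{i+m}$, $m\ge1$ implies $x_n^{y_j}/x_n^{y_k}\to\infty$. *)

From Stdlib Require Import Reals List Relations.
Import ListNotations.
Open Scope R_scope.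

(* A complex on species S_1..S_N is a list of N natural coefficients
   (species i is index i-1). A reaction is a pair (y, y'). *)
Definition complex := list nat.
Definition reaction := (complex * complex)%type.

Fixpoint rsum (n : nat) (f : nat -> R) : R :=
  match n with O => 0 | S m => rsum m f + f m end.
Fixpoint rprod (n : nat) (f : nat -> R) : R :=
  match n with O => 1 | S m => rprod m f * f m end.

Definition coef (y : complex) (i : nat) : nat := nth i y O.

(* x^y = prod_i x_i^{y_i}  (pow with nat exponent, so 0^0 = 1) *)
Definition monom (N : nat) (x : nat -> R) (y : complex) : R :=
  rprod N (fun i => x i ^ coef y i).

Definition is_complex (Rs : list reaction) (y : complex) : Prop :=
  exists z, In (y, z) Rs \/ In (z, y) Rs.

Definition reaction_network (N : nat) (Rs : list reaction) : Prop :=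
  NoDup Rs /\
  (forall y, is_complex Rs y -> length y = N) /\
  (forall y y', In (y, y') Rs -> y <> y') /\
  (forall i, (i < N)%nat -> exists y, is_complex Rs y /\ (0 < coef y i)%nat).

Definition rxn_edge (Rs : list reaction) (y z : complex) : Prop := In (y, z) Rs.

Definition linked (Rs : list reaction) : relation complex :=
  clos_refl_sym_trans complex (rxn_edge Rs).

Definition reaches (Rs : list reaction) : relation complex :=
  clos_refl_trans complex (rxn_edge Rs).

Definition weakly_reversible (Rs : list reaction) : Prop :=
  forall y z, is_complex Rs y -> is_complex Rs z -> linked Rs y z -> reaches Rs y z.

Definition union_of_linkage_classes (Rs : list reaction) (T : complex -> Prop) : Prop :=
  (exists y, T y) /\ (forall y, T y -> is_complex Rs y) /\
  (forall y z, T y -> linked Rs y z -> T z).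

(* bounded kinetics; kappa k is the rate function of reaction k (0-based) *)
Definition bounded_kinetics (Rs : list reaction) (kappa : nat -> R -> R) (eta : R) : Prop :=
  0 < eta /\
  forall k t, (k < length Rs)%nat -> 0 <= t -> eta < kappa k t < 1 / eta.

Definition field_dot_ln (N : nat) (Rs : list reaction) (kappa : nat -> R -> R)
    (x : nat -> R) (t : R) : R :=
  rsum (length Rs) (fun k =>
    let y := fst (nth k Rs ([], [])) in
    let y' := snd (nth k Rs ([], [])) in
    kappa k t * monom N x y *
      rsum N (fun i => (INR (coef y' i) - INR (coef y i)) * ln (x i))).

(* C is partitioned along the sequence xs with tiers T 0, ..., T (P-1)
   (paper's T_1..T_P) and constant Cc *)
Definition partitioned_along (N : nat) (Rs : list reaction) (xs : nat -> nat -> R)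
    (P : nat) (T : nat -> complex -> Prop) (Cc : R) : Prop :=
  1 < Cc /\
  (forall i, (i < P)%nat -> exists y, T i y) /\
  (forall i y, (i < P)%nat -> T i y -> is_complex Rs y) /\
  (forall y, is_complex Rs y -> exists i, (i < P)%nat /\ T i y) /\
  (forall i j y, (i < P)%nat -> (j < P)%nat -> T i y -> T j y -> i = j) /\
  (forall i yj yk n, (i < P)%nat -> T i yj -> T i yk ->
      / Cc * monom N (xs n) yj <= monom N (xs n) yk /\
      monom N (xs n) yk <= Cc * monom N (xs n) yj) /\
  (forall i i' yj yk, (i < i')%nat -> (i' < P)%nat -> T i yj -> T i' yk ->
      cv_infty (fun n => monom N (xs n) yj / monom N (xs n) yk)).

From Stdlib Require Import Reals List Relations Classical ClassicalEpsilon Lia Lra.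
Import ListNotations.
Open Scope R_scope.

(* If (C1) fails, there are points x_n of D leaving every compact box at which the field points
   weakly outward, f(x_n, t_n) . ln x_n >= 0.  After passing to a subsequence, every ln x_{n,i} and
   every difference (y - y') . ln x_n is bounded or tends to +oo or -oo; since the points escape,
   some coordinate diverges.  Grouping the complexes by the asymptotic order of the monomials
   x_n^y gives the tiers.  A reaction a -> b from the top tier to a lower one would contribute
   -kappa x_n^a (a - b) . ln x_n, which eventually outweighs all the other terms, each at most a
   constant times x_n^a; so the top tier is closed under reactions, and by weak reversibility it
   is a union of linkage classes. *)

Lemma rsum_ext n f g : (forall i, (i < n)%nat -> f i = g i) -> rsum n f = rsum n g.
Proof.
  induction n as [|n IH]; intros H; simpl; [reflexivity|].
  rewrite (H n) by lia; f_equal; apply IH; intros; apply H; lia.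
Qed.

Lemma rsum_le n f g : (forall i, (i < n)%nat -> f i <= g i) -> rsum n f <= rsum n g.
Proof.
  induction n as [|n IH]; intros H; simpl; [lra|].
  apply Rplus_le_compat; [apply IH; intros; apply H|apply H]; lia.
Qed.

Lemma rsum_minus n f g : rsum n (fun i => f i - g i) = rsum n f - rsum n g.
Proof. induction n as [|n IH]; simpl; [lra|]. rewrite IH; ring. Qed.

Lemma rsum_const n c : rsum n (fun _ => c) = INR n * c.
Proof. induction n as [|n IH]; simpl rsum; [simpl; ring|]. rewrite IH, S_INR; ring. Qed.

Lemma rsum_le_one_term n f c k0 v : 0 <= c -> (k0 < n)%nat -> f k0 <= v ->
  (forall k, (k < n)%nat -> f k <= c) -> rsum n f <= INR n * c + v.
Proof.
  induction n as [|n IH]; intros Hc Hk0 Hv Hf; [lia|]. simpl rsum. rewrite S_INR.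
  destruct (Nat.eq_dec k0 n) as [->|Hne].
  - assert (rsum n f <= INR n * c).
    { rewrite <- rsum_const. apply rsum_le. intros; apply Hf; lia. }
    lra.
  - assert (rsum n f <= INR n * c + v) by (apply IH; auto; lia).
    assert (f n <= c) by (apply Hf; lia). lra.
Qed.

Lemma Rabs_le_bounds x B : Rabs x <= B -> - B <= x <= B.
Proof. unfold Rabs. destruct (Rcase_abs x); lra. Qed.

Lemma exp_le_exp u v : u <= v -> exp u <= exp v.
Proof. intros [H|H]; [left; apply exp_increasing, H|right; subst; reflexivity]. Qed.

Definition bounded_seq (s : nat -> R) : Prop := exists B, forall n, Rabs (s n) <= B.

Definition trichotomous (s : nat -> R) : Prop :=
  bounded_seq s \/ cv_infty s \/ cv_infty (fun n => - s n).

Lemma cv_infty_ext s t : (forall n, s n = t n) -> cv_infty s -> cv_infty t.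
Proof. intros E H M. destruct (H M) as [n0 Hn0]. exists n0. intros n Hn. rewrite <- E; auto. Qed.

Lemma cv_infty_plus s t : cv_infty s -> cv_infty t -> cv_infty (fun n => s n + t n).
Proof.
  intros Hs Ht M. destruct (Hs M) as [n0 H0], (Ht 0) as [n1 H1].
  exists (max n0 n1). intros n Hn.
  specialize (H0 n ltac:(lia)). specialize (H1 n ltac:(lia)). lra.
Qed.

Lemma cv_infty_plus_bounded s t : cv_infty s -> bounded_seq t -> cv_infty (fun n => s n + t n).
Proof.
  intros Hs [B Ht] M. destruct (Hs (M + B)) as [n0 H0]. exists n0. intros n Hn.
  specialize (H0 n Hn). specialize (Ht n). apply Rabs_le_bounds in Ht. lra.
Qed.

Lemma bounded_not_cv_infty s : bounded_seq s -> ~ cv_infty s.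
Proof.
  intros [B HB] H. destruct (H B) as [n0 Hn0].
  specialize (Hn0 n0 (le_n _)). specialize (HB n0). pose proof (Rle_abs (s n0)). lra.
Qed.

Lemma cv_infty_exp s : cv_infty s -> cv_infty (fun n => exp (s n)).
Proof.
  intros H M. destruct (H M) as [n0 Hn0]. exists n0. intros n Hn.
  specialize (Hn0 n Hn). pose proof (exp_ineq1_le (s n)). lra.
Qed.

Lemma cv_infty_ln s : (forall n, 0 < s n) -> cv_infty (fun n => ln (s n)) -> cv_infty s.
Proof.
  intros Hpos H. apply (cv_infty_ext (fun n => exp (ln (s n)))).
  - intro n. apply exp_ln, Hpos.
  - apply cv_infty_exp, H.
Qed.

Lemma cv_infty_opp_ln_cv_0 s : (forall n, 0 < s n) -> cv_infty (fun n => - ln (s n)) -> Un_cv s 0.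
Proof.
  intros Hpos H eps Heps. destruct (H (- ln eps)) as [n0 Hn0]. exists n0. intros n Hn.
  specialize (Hn0 n Hn). pose proof (Hpos n).
  assert (s n < eps) by (apply ln_lt_inv; auto; lra).
  unfold Rdist. rewrite Rminus_0_r, Rabs_right; lra.
Qed.

Lemma bounded_seq_uniform_on_list {A : Type} (s : A -> nat -> R) (l : list A) :
  exists B, 0 <= B /\ forall a n, In a l -> bounded_seq (s a) -> Rabs (s a n) <= B.
Proof.
  induction l as [|a l [B [HB0 HB]]].
  - exists 0. split; [lra|]. intros a n [].
  - destruct (classic (bounded_seq (s a))) as [[Ba Ha]|Hna].
    + exists (Rmax B Ba). split; [pose proof (Rmax_l B Ba); lra|].
      intros c n [<-|Hc] Hbd.
      * pose proof (Ha n). pose proof (Rmax_r B Ba). lra.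
      * pose proof (HB c n Hc Hbd). pose proof (Rmax_l B Ba). lra.
    + exists B. split; auto. intros c n [<-|Hc] Hbd; [contradiction|auto].
Qed.

Lemma eventually_le_uniform_on_list {A : Type} (s : A -> nat -> R) (l : list A) :
  (forall a, In a l -> exists B n0, forall n, (n0 <= n)%nat -> s a n <= B) ->
  exists B n0, forall a n, In a l -> (n0 <= n)%nat -> s a n <= B.
Proof.
  induction l as [|a l IH]; intros H.
  - exists 0, O. intros a n [].
  - destruct IH as [B [n0 HB]]; [intros; apply H; right; auto|].
    destruct (H a (or_introl eq_refl)) as [Ba [na Ha]].
    exists (Rmax B Ba), (max n0 na). intros c n [<-|Hc] Hn.
    + pose proof (Ha n ltac:(lia)). pose proof (Rmax_r B Ba). lra.
    + pose proof (HB c n Hc ltac:(lia)). pose proof (Rmax_l B Ba). lra.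
Qed.

Definition strictly_increasing (p : nat -> nat) : Prop := forall n, (p n < p (S n))%nat.

Definition frequently (Q : nat -> Prop) : Prop := forall m, exists n, (m <= n)%nat /\ Q n.

Lemma strictly_increasing_le p : strictly_increasing p ->
  forall n m, (n <= m)%nat -> (p n <= p m)%nat.
Proof. intros Hp n m H. induction H as [|m _ IH]; [lia|]. specialize (Hp m). lia. Qed.

Lemma strictly_increasing_ge p : strictly_increasing p -> forall n, (n <= p n)%nat.
Proof. intros Hp n. induction n as [|n IH]; [lia|]. specialize (Hp n). lia. Qed.

Lemma strictly_increasing_comp p q : strictly_increasing p -> strictly_increasing q ->
  strictly_increasing (fun n => p (q n)).
Proof.
  intros Hp Hq n. specialize (Hq n).
  pose proof (strictly_increasing_le p Hp (S (q n)) (q (S n)) Hq). specialize (Hp (q n)). lia.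
Qed.

Lemma not_frequently Q : ~ frequently Q -> exists m, forall n, (m <= n)%nat -> ~ Q n.
Proof.
  intros H. apply NNPP. intros Hm. apply H. intros m. apply NNPP. intros Hn.
  apply Hm. exists m. intros n Hmn HQ. apply Hn. exists n; auto.
Qed.

Lemma frequently_subseq Q : frequently Q -> exists p, strictly_increasing p /\ forall n, Q (p n).
Proof.
  intros H. destruct (choice _ H) as [h Hh].
  set (p := fix p n := match n with O => h O | S k => h (S (p k)) end).
  exists p. split.
  - intros n. change (p (S n)) with (h (S (p n))). destruct (Hh (S (p n))). lia.
  - intros [|n]; apply Hh.
Qed.

Lemma trichotomous_subseq s p : strictly_increasing p -> trichotomous s ->
  trichotomous (fun n => s (p n)).
Proof.
  intros Hp Hs. pose proof (strictly_increasing_ge p Hp) as Hge.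
  destruct Hs as [[B HB]|[H|H]]; [left; exists B; auto|right; left|right; right];
    intros M; destruct (H M) as [n0 Hn0]; exists n0; intros n Hn; apply Hn0;
    specialize (Hge n); lia.
Qed.

Lemma exists_trichotomous_subseq s :
  exists p, strictly_increasing p /\ trichotomous (fun n => s (p n)).
Proof.
  destruct (classic (exists B, frequently (fun n => Rabs (s n) <= B))) as [[B HB]|Hunb].
  { destruct (frequently_subseq _ HB) as [p [Hp Hs]].
    exists p. split; [auto|left; exists B; auto]. }
  assert (Hlarge : forall B, exists m, forall n, (m <= n)%nat -> B < Rabs (s n)).
  { intros B. destruct (classic (frequently (fun n => Rabs (s n) <= B))) as [H|H].
    - exfalso. apply Hunb. exists B. auto.
    - destruct (not_frequently _ H) as [m Hm]. exists m. intros n Hn. apply Rnot_le_lt, Hm, Hn. }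
  destruct (classic (frequently (fun n => 0 <= s n))) as [Hnn|Hneg].
  - destruct (frequently_subseq _ Hnn) as [p [Hp Hs]]. exists p. split; [auto|right; left].
    intros M. destruct (Hlarge M) as [m Hm]. exists m. intros n Hn.
    specialize (Hm (p n)). rewrite Rabs_right in Hm by (apply Rle_ge, Hs).
    apply Hm. pose proof (strictly_increasing_ge p Hp n). lia.
  - destruct (not_frequently _ Hneg) as [m0 Hm0].
    exists (fun n => n). split; [intros n; lia|right; right].
    intros M. destruct (Hlarge M) as [m Hm]. exists (max m0 m). intros n Hn.
    specialize (Hm n ltac:(lia)). specialize (Hm0 n ltac:(lia)).
    rewrite Rabs_left in Hm by lra. exact Hm.
Qed.

Lemma exists_common_trichotomous_subseq {A : Type} (s : A -> nat -> R) (l : list A) :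
  exists p, strictly_increasing p /\ forall a, In a l -> trichotomous (fun n => s a (p n)).
Proof.
  induction l as [|a l [p [Hp Hl]]].
  - exists (fun n => n). split; [intros n; lia|intros a []].
  - destruct (exists_trichotomous_subseq (fun n => s a (p n))) as [q [Hq Ha]].
    exists (fun n => p (q n)). split; [apply strictly_increasing_comp; auto|].
    intros b [<-|Hb]; [exact Ha|].
    apply (trichotomous_subseq (fun n => s b (p n))); auto.
Qed.

Lemma filter_length_mono {A : Type} (f g : A -> bool) (l : list A) :
  (forall z, In z l -> f z = true -> g z = true) ->
  (length (filter f l) <= length (filter g l))%nat.
Proof.
  induction l as [|z l IH]; intros H; simpl; [lia|].
  specialize (IH (fun w Hw => H w (or_intror Hw))).
  destruct (f z) eqn:Ef; [rewrite (H z (or_introl eq_refl) Ef); simpl; lia|].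
  destruct (g z); simpl; lia.
Qed.

Lemma filter_length_mono_strict {A : Type} (f g : A -> bool) (l : list A) :
  (forall z, In z l -> f z = true -> g z = true) ->
  (exists z, In z l /\ f z = false /\ g z = true) ->
  (length (filter f l) < length (filter g l))%nat.
Proof.
  induction l as [|z l IH]; intros H [w [Hw [Ef Eg]]]; [destruct Hw|]; simpl.
  destruct Hw as [<-|Hw].
  - rewrite Ef, Eg. simpl.
    pose proof (filter_length_mono f g l (fun w Hw => H w (or_intror Hw))). lia.
  - specialize (IH (fun w Hw => H w (or_intror Hw)) (ex_intro _ w (conj Hw (conj Ef Eg)))).
    destruct (f z) eqn:Efz; [rewrite (H z (or_introl eq_refl) Efz); simpl; lia|].
    destruct (g z); simpl; lia.
Qed.

(* [g v] counts the distinct values of [l] below [v]; surjectivity onto [0, P) is pigeonhole. *)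
Lemma order_compression (l : list nat) : exists (P : nat) (g : nat -> nat),
  (forall v, In v l -> (g v < P)%nat) /\
  (forall i, (i < P)%nat -> exists v, In v l /\ g v = i) /\
  (forall v w, In v l -> In w l -> (v < w)%nat <-> (g v < g w)%nat).
Proof.
  set (l' := nodup Nat.eq_dec l).
  assert (Hl' : forall v, In v l' <-> In v l) by apply nodup_In.
  set (g := fun v => length (filter (fun w => Nat.ltb w v) l')).
  assert (Hlt : forall v w, In v l -> (v < w)%nat -> (g v < g w)%nat).
  { intros v w Hv Hvw. apply filter_length_mono_strict.
    - intros z _ Hz. apply Nat.ltb_lt in Hz. apply Nat.ltb_lt. lia.
    - exists v. rewrite Hl', Nat.ltb_irrefl, (proj2 (Nat.ltb_lt v w) Hvw). auto. }
  assert (Hle : forall v w, (v <= w)%nat -> (g v <= g w)%nat).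
  { intros v w Hvw. apply filter_length_mono.
    intros z _ Hz. apply Nat.ltb_lt in Hz. apply Nat.ltb_lt. lia. }
  assert (Hiff : forall v w, In v l -> In w l -> (v < w)%nat <-> (g v < g w)%nat).
  { intros v w Hv _. split; [apply Hlt; auto|].
    intros H. destruct (Nat.lt_ge_cases v w) as [?|Hwv]; auto. pose proof (Hle _ _ Hwv). lia. }
  assert (Hbound : forall v, In v l -> (g v < length l')%nat).
  { intros v Hv. pose proof (Hlt v (S v) Hv (Nat.lt_succ_diag_r v)).
    pose proof (filter_length_le (fun w => Nat.ltb w (S v)) l'). unfold g in *. lia. }
  exists (length l'), g. split; [exact Hbound|split; [|exact Hiff]].
  assert (Hnodup : NoDup (map g l')).
  { apply NoDup_map_NoDup_ForallPairs; [|apply NoDup_nodup].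
    intros v w Hv Hw E. rewrite Hl' in Hv, Hw.
    destruct (Nat.lt_total v w) as [H|[H|H]]; auto;
      [apply Hlt in H|apply Hlt in H]; auto; lia. }
  assert (Hcover : incl (seq 0 (length l')) (map g l')).
  { apply NoDup_length_incl; auto.
    - rewrite length_map, length_seq. lia.
    - intros i Hi. apply in_map_iff in Hi as [v [<- Hv]]. rewrite Hl' in Hv.
      apply in_seq. pose proof (Hbound v Hv). lia. }
  intros i Hi. destruct (in_map_iff g l' i) as [H _].
  destruct H as [v [Ev Hv]]; [apply Hcover, in_seq; lia|].
  exists v. rewrite Hl' in Hv. auto.
Qed.

Section Tiers.
Variables (A : Type) (u : A -> nat -> R) (l : list A).

Definition dominates (a b : A) : Prop := cv_infty (fun n => u a n - u b n).
Definition comparable (a b : A) : Prop := bounded_seq (fun n => u a n - u b n).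

Lemma dominates_irrefl a : ~ dominates a a.
Proof.
  apply bounded_not_cv_infty. exists 0. intros n. rewrite Rminus_diag, Rabs_R0. lra.
Qed.

Lemma dominates_trans a b c : dominates a b -> dominates b c -> dominates a c.
Proof.
  intros Hab Hbc. apply (cv_infty_ext (fun n => (u a n - u b n) + (u b n - u c n))).
  - intros n; ring.
  - apply cv_infty_plus; auto.
Qed.

Lemma dominates_comparable a b c : dominates a b -> comparable b c -> dominates a c.
Proof.
  intros Hab Hbc. apply (cv_infty_ext (fun n => (u a n - u b n) + (u b n - u c n))).
  - intros n; ring.
  - apply cv_infty_plus_bounded; auto.
Qed.

Lemma comparable_sym a b : comparable a b -> comparable b a.
Proof.
  intros [B HB]. exists B. intros n. rewrite <- Rabs_Ropp.
  replace (- (u b n - u a n)) with (u a n - u b n) by ring. auto.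
Qed.

Hypothesis gaps_trichotomous :
  forall a b, In a l -> In b l -> trichotomous (fun n => u a n - u b n).

Lemma comparable_or_dominates a b : In a l -> In b l ->
  comparable a b \/ dominates a b \/ dominates b a.
Proof.
  intros Ha Hb.
  destruct (gaps_trichotomous a b Ha Hb) as [H|[H|H]]; [left|right; left|right; right]; auto.
  apply (cv_infty_ext _ _ (fun n => Ropp_minus_distr (u a n) (u b n)) H).
Qed.

Definition dominance_rank (a : A) : nat :=
  length (filter (fun z => if excluded_middle_informative (dominates z a) then true else false) l).

Lemma dominance_rank_lt a b : In a l -> dominates a b -> (dominance_rank a < dominance_rank b)%nat.
Proof.
  intros Ha Hab. apply filter_length_mono_strict.
  - intros z _. do 2 destruct excluded_middle_informative; auto.
    intros _. exfalso. eauto using dominates_trans.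
  - exists a. split; auto. do 2 destruct excluded_middle_informative; auto.
    + exfalso. eapply dominates_irrefl; eauto.
    + contradiction.
Qed.

Lemma dominance_rank_comparable a b : comparable a b -> dominance_rank a = dominance_rank b.
Proof.
  intros Hab. unfold dominance_rank. f_equal. apply filter_ext. intros z.
  do 2 destruct excluded_middle_informative as [?|?]; auto; exfalso.
  - eauto using dominates_comparable.
  - eauto using dominates_comparable, comparable_sym.
Qed.

Definition tiering (P : nat) (tier : A -> nat) : Prop :=
  (forall a, In a l -> (tier a < P)%nat) /\
  (forall i, (i < P)%nat -> exists a, In a l /\ tier a = i) /\
  (forall a b, In a l -> In b l -> (tier a < tier b)%nat <-> dominates a b) /\
  (forall a b, In a l -> In b l -> tier a = tier b -> comparable a b).

Lemma tiering_exists : exists P tier, tiering P tier.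
Proof.
  destruct (order_compression (map dominance_rank l)) as [P [g [Hbound [Hsurj Hiff]]]].
  assert (Hrank : forall a b, In a l -> In b l ->
    (dominance_rank a < dominance_rank b)%nat <-> dominates a b).
  { intros a b Ha Hb. split; [|apply dominance_rank_lt; auto].
    intros Hlt. destruct (comparable_or_dominates a b Ha Hb) as [H|[H|H]]; auto.
    - rewrite (dominance_rank_comparable a b H) in Hlt. lia.
    - pose proof (dominance_rank_lt b a Hb H). lia. }
  assert (Htier : forall a b, In a l -> In b l ->
    (g (dominance_rank a) < g (dominance_rank b))%nat <-> dominates a b).
  { intros a b Ha Hb. rewrite <- Hiff by (apply in_map; auto). auto. }
  exists P, (fun a => g (dominance_rank a)). split; [|split; [|split]].
  - intros a Ha. apply Hbound, in_map, Ha.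
  - intros i Hi. destruct (Hsurj i Hi) as [v [Hv Ev]].
    apply in_map_iff in Hv as [a [<- Ha]]. eauto.
  - exact Htier.
  - intros a b Ha Hb E. destruct (comparable_or_dominates a b Ha Hb) as [H|[H|H]]; auto;
      apply Htier in H; auto; lia.
Qed.

End Tiers.

Arguments dominates {A}.
Arguments comparable {A}.
Arguments tiering {A}.
Arguments tiering_exists {A}.

Definition log_monom (N : nat) (x : nat -> R) (y : complex) : R :=
  rsum N (fun i => INR (coef y i) * ln (x i)).

Lemma monom_eq_exp N x y : (forall i, (i < N)%nat -> 0 < x i) ->
  monom N x y = exp (log_monom N x y).
Proof.
  unfold monom, log_monom. induction N as [|N IH]; intros Hx; simpl; [now rewrite exp_0|].
  rewrite exp_plus, IH by auto. f_equal.
  rewrite <- Rpower_pow by (apply Hx; lia). reflexivity.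
Qed.

Lemma field_dot_ln_eq N Rs kappa x t : (forall i, (i < N)%nat -> 0 < x i) ->
  field_dot_ln N Rs kappa x t =
  rsum (length Rs) (fun k =>
    kappa k t * exp (log_monom N x (fst (nth k Rs ([], [])))) *
      (log_monom N x (snd (nth k Rs ([], []))) - log_monom N x (fst (nth k Rs ([], []))))).
Proof.
  intros Hx. apply rsum_ext. intros k _. cbv zeta.
  rewrite monom_eq_exp by auto. unfold log_monom. rewrite <- rsum_minus.
  f_equal. apply rsum_ext. intros i _. ring.
Qed.

Lemma rate_term_le eta k u v : 0 < eta -> eta < k < 1 / eta ->
  k * exp u * (v - u) <= / eta * exp v.
Proof.
  intros Heta Hk. unfold Rdiv in Hk. rewrite Rmult_1_l in Hk.
  assert (Hexp : exp u * (v - u) <= exp v).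
  { replace (exp v) with (exp u * exp (v - u)) by (rewrite <- exp_plus; f_equal; ring).
    pose proof (exp_ineq1_le (v - u)). pose proof (exp_pos u). nra. }
  pose proof (exp_pos u). pose proof (exp_pos v).
  destruct (Rle_lt_dec 0 (v - u)); nra.
Qed.

(* Every term of the sum is at most [exp B * x^a / eta], while the term of [a -> b] is at most
   [- eta * x^a * d] with [d] the left-hand side; a nonnegative sum thus bounds [d]. *)
Lemma outflow_bound N Rs kappa eta x t a b B :
  bounded_kinetics Rs kappa eta -> 0 <= t ->
  (forall i, (i < N)%nat -> 0 < x i) ->
  0 <= field_dot_ln N Rs kappa x t ->
  (forall y, is_complex Rs y -> log_monom N x y <= log_monom N x a + B) ->
  In (a, b) Rs ->
  log_monom N x a - log_monom N x b <= INR (length Rs) * exp B / (eta * eta).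
Proof.
  intros [Heta Hk] Ht Hx Hfield Htop Hab.
  pose proof (exp_pos B). pose proof (pos_INR (length Rs)). pose proof (exp_pos (log_monom N x a)).
  set (d := log_monom N x a - log_monom N x b).
  set (M := exp (log_monom N x a)) in *.
  assert (Hbound0 : 0 <= INR (length Rs) * exp B / (eta * eta)).
  { unfold Rdiv. apply Rmult_le_pos; [nra|]. left. apply Rinv_0_lt_compat. nra. }
  destruct (Rle_lt_dec d 0) as [Hd|Hd]; [lra|].
  destruct (In_nth Rs (a, b) ([], []) Hab) as [k0 [Hk0 Ek0]].
  set (c := / eta * exp B * M).
  assert (Hc : 0 <= c) by (unfold c; pose proof (Rinv_0_lt_compat eta Heta);
    apply Rmult_le_pos; [apply Rmult_le_pos|]; lra).
  assert (Hsum : field_dot_ln N Rs kappa x t <= INR (length Rs) * c + - (eta * M * d)).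
  { rewrite field_dot_ln_eq by auto. apply rsum_le_one_term with k0; auto.
    - rewrite Ek0. simpl. fold M. destruct (Hk k0 t Hk0 Ht).
      replace (log_monom N x b - log_monom N x a) with (- d) by (unfold d; ring).
      assert (0 < M * d) by nra. nra.
    - intros k Hk'. destruct (Hk k t Hk' Ht) as [Hk1 Hk2].
      eapply Rle_trans; [apply (rate_term_le eta); auto|].
      assert (Hy' : is_complex Rs (snd (nth k Rs ([], [])))).
      { exists (fst (nth k Rs ([], []))). right.
        rewrite <- surjective_pairing. apply nth_In; auto. }
      pose proof (Htop _ Hy') as Hle. apply exp_le_exp in Hle.
      rewrite exp_plus in Hle. fold M in Hle.
      unfold c. rewrite Rmult_assoc, (Rmult_comm (exp B)).
      apply Rmult_le_compat_l; [left; apply Rinv_0_lt_compat|]; lra. }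
  assert (E : eta * M * (d - INR (length Rs) * exp B / (eta * eta)) =
              eta * M * d - INR (length Rs) * c).
  { unfold c. field. lra. }
  assert (eta * M * (d - INR (length Rs) * exp B / (eta * eta)) <= 0) by lra.
  assert (0 < eta * M) by nra. nra.
Qed.

Lemma exp_within_factor u v C : Rabs (v - u) <= C ->
  / exp C * exp u <= exp v /\ exp v <= exp C * exp u.
Proof.
  intros H. apply Rabs_le_bounds in H.
  replace v with (u + (v - u)) by ring. rewrite exp_plus, <- exp_Ropp.
  pose proof (exp_pos u).
  split; [rewrite (Rmult_comm (exp (- C)))|rewrite (Rmult_comm (exp C))];
    apply Rmult_le_compat_l; try lra; apply exp_le_exp; lra.
Qed.

Definition complexes (Rs : list reaction) : list complex := map fst Rs ++ map snd Rs.

Lemma is_complex_In Rs y : is_complex Rs y <-> In y (complexes Rs).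
Proof.
  unfold is_complex, complexes. rewrite in_app_iff, !in_map_iff. split.
  - intros [z [H|H]]; [left; exists (y, z)|right; exists (z, y)]; auto.
  - intros [[[p q] [E H]]|[[p q] [E H]]]; simpl in E; subst; eauto.
Qed.

Lemma forward_closed_union_of_linkage_classes Rs (T : complex -> Prop) :
  weakly_reversible Rs -> (exists y, T y) -> (forall y, T y -> is_complex Rs y) ->
  (forall a b, In (a, b) Rs -> T a -> T b) -> union_of_linkage_classes Rs T.
Proof.
  intros HWR Hne Hcx Hfwd. split; [exact Hne|split; [exact Hcx|]].
  assert (Hreach : forall y z, reaches Rs y z -> T y -> T z).
  { intros y z H. induction H; eauto. }
  assert (Hlinked : forall y z, linked Rs y z -> T y <-> T z).
  { intros y z H. induction H as [y z H| | |]; try tauto. split; [apply Hfwd, H|].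
    intros Tz. apply (Hreach z y); auto. apply HWR.
    - exists y. right. exact H.
    - exists z. left. exact H.
    - apply rst_sym, rst_step, H. }
  intros y z Ty Hyz. apply (Hlinked y z Hyz), Ty.
Qed.

Section Tiered_partition.
Variables (N : nat) (Rs : list reaction) (xs : nat -> nat -> R).
Hypothesis xs_pos : forall n i, (i < N)%nat -> 0 < xs n i.

Let L (y : complex) (n : nat) : R := log_monom N (xs n) y.

Lemma partitioned_along_tiering P tier :
  tiering L (complexes Rs) P tier ->
  exists Cc, partitioned_along N Rs xs P (fun i y => In y (complexes Rs) /\ tier y = i) Cc.
Proof.
  intros [Hlt [Hsurj [Hdom Hcmp]]].
  destruct (bounded_seq_uniform_on_list (fun ab n => L (fst ab) n - L (snd ab) n)
    (list_prod (complexes Rs) (complexes Rs))) as [B [HB0 HB]].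
  assert (Hmonom : forall n y, monom N (xs n) y = exp (L y n)).
  { intros n y. apply monom_eq_exp. auto. }
  assert (HC : exp 0 < exp (B + 1)) by (apply exp_increasing; lra). rewrite exp_0 in HC.
  exists (exp (B + 1)). split; [exact HC|].
  split; [intros i Hi; destruct (Hsurj i Hi) as [y Hy]; eauto|].
  split; [intros i y _ [Hy _]; apply is_complex_In, Hy|].
  split; [intros y Hy; apply is_complex_In in Hy; eauto|].
  split; [intros i j y _ _ [_ <-] [_ <-]; reflexivity|].
  split.
  - intros i yj yk n _ [Hj <-] [Hk Ejk].
    assert (Hgap : Rabs (L yk n - L yj n) <= B + 1).
    { pose proof (HB (yk, yj) n ltac:(apply in_prod; auto) (Hcmp yk yj Hk Hj Ejk)).
      simpl in *. lra. }
    rewrite !Hmonom. apply exp_within_factor, Hgap.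
  - intros i i' yj yk Hii' _ [Hj <-] [Hk <-].
    apply (cv_infty_ext (fun n => exp (L yj n - L yk n))).
    + intros n. rewrite !Hmonom. unfold Rminus. rewrite exp_plus, exp_Ropp. reflexivity.
    + apply cv_infty_exp, Hdom; auto.
Qed.

Variables (kappa : nat -> R -> R) (eta : R) (ts : nat -> R).
Hypothesis kinetics : bounded_kinetics Rs kappa eta.
Hypothesis ts_nonneg : forall n, 0 <= ts n.
Hypothesis field_nonneg : forall n, 0 <= field_dot_ln N Rs kappa (xs n) (ts n).

Lemma reaction_not_dominated a b :
  (exists B n0, forall y n, is_complex Rs y -> (n0 <= n)%nat -> L y n <= L a n + B) ->
  In (a, b) Rs -> ~ dominates L a b.
Proof.
  intros [B [n0 HB]] Hab Hdom.
  destruct (Hdom (INR (length Rs) * exp B / (eta * eta))) as [n1 Hn1].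
  set (n := max n0 n1).
  pose proof (Hn1 n ltac:(lia)).
  pose proof (outflow_bound N Rs kappa eta (xs n) (ts n) a b B kinetics (ts_nonneg n) (xs_pos n)
    (field_nonneg n) (fun y Hy => HB y n Hy ltac:(lia)) Hab).
  unfold L in *. lra.
Qed.

(* Every complex is either comparable to [a] or eventually below it, so [a] is eventually
   maximal up to a constant. *)
Lemma top_tier_closed P tier a b :
  tiering L (complexes Rs) P tier -> In (a, b) Rs -> tier a = 0%nat -> tier b = 0%nat.
Proof.
  intros [_ [_ [Hdom Hcmp]]] Hab Ha0.
  assert (Ha : In a (complexes Rs)) by (apply is_complex_In; exists b; left; exact Hab).
  assert (Hb : In b (complexes Rs)) by (apply is_complex_In; exists a; right; exact Hab).
  destruct (Nat.eq_dec (tier b) 0) as [|Hb0]; auto. exfalso.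
  apply (reaction_not_dominated a b); [|exact Hab|apply Hdom; auto; lia].
  destruct (eventually_le_uniform_on_list (fun y n => L y n - L a n) (complexes Rs))
    as [B [n0 HB]].
  - intros y Hy. destruct (Nat.eq_dec (tier y) 0) as [Hy0|Hy0].
    + destruct (Hcmp y a Hy Ha ltac:(lia)) as [B HB]. exists B, O. intros n _.
      pose proof (HB n). pose proof (Rle_abs (L y n - L a n)). lra.
    + destruct (proj1 (Hdom a y Ha Hy) ltac:(lia) 0) as [n0 Hn0]. exists 0, n0. intros n Hn.
      specialize (Hn0 n Hn). lra.
  - exists B, n0. intros y n Hy Hn. apply is_complex_In in Hy.
    specialize (HB y n Hy Hn). simpl in HB. lra.
Qed.

Lemma tiered_partition : weakly_reversible Rs -> complexes Rs <> [] ->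
  (forall a b, In a (complexes Rs) -> In b (complexes Rs) ->
     trichotomous (fun n => L a n - L b n)) ->
  exists P T Cc, partitioned_along N Rs xs P T Cc /\ union_of_linkage_classes Rs (T O).
Proof.
  intros HWR Hne Htri.
  destruct (tiering_exists L (complexes Rs) Htri) as [P [tier Htier]].
  destruct (partitioned_along_tiering P tier Htier) as [Cc HCc].
  exists P, (fun i y => In y (complexes Rs) /\ tier y = i), Cc. split; [exact HCc|].
  apply forward_closed_union_of_linkage_classes; auto.
  - assert (Hy0 : exists y0, In y0 (complexes Rs))
      by (destruct (complexes Rs); [contradiction|eexists; left; reflexivity]).
    destruct Hy0 as [y0 Hy0]. destruct Htier as [Hlt [Hsurj _]].
    destruct (Hsurj O) as [y Hy]; [pose proof (Hlt y0 Hy0); lia|eauto].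
  - intros y [Hy _]. apply is_complex_In, Hy.
  - intros a b Hab [Ha Ha0]. split; [apply is_complex_In; exists a; right; exact Hab|].
    eapply top_tier_closed; eauto.
Qed.

End Tiered_partition.

Definition escapes (N : nat) (M : R) (x : nat -> R) : Prop :=
  exists i, (i < N)%nat /\ (M < x i \/ x i < 1 / M).

Lemma escapes_weaken N M M' x : 0 < M' <= M -> escapes N M x -> escapes N M' x.
Proof.
  intros HM [i [Hi Hx]]. exists i. split; auto. destruct Hx as [Hx|Hx]; [left; lra|right].
  apply Rlt_le_trans with (1 / M); auto.
  unfold Rdiv. rewrite !Rmult_1_l. apply Rinv_le_contravar; lra.
Qed.

Lemma escapes_subseq N x r : strictly_increasing r ->
  (forall n, escapes N (INR n + 1) (x n)) ->
  forall M, 0 < M -> exists n, escapes N M (x (r n)).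
Proof.
  intros Hr Hx M HM. destruct (INR_unbounded M) as [n Hn]. exists n.
  apply escapes_weaken with (INR (r n) + 1); [|apply Hx].
  pose proof (le_INR _ _ (strictly_increasing_ge r Hr n)). lra.
Qed.

Lemma divergent_coordinate N xs : (forall n i, (i < N)%nat -> 0 < xs n i) ->
  (forall M, 0 < M -> exists n, escapes N M (xs n)) ->
  (forall i, (i < N)%nat -> trichotomous (fun n => ln (xs n i))) ->
  exists i, (i < N)%nat /\ (Un_cv (fun n => xs n i) 0 \/ cv_infty (fun n => xs n i)).
Proof.
  intros Hpos Hesc Htri.
  destruct (classic (exists i, (i < N)%nat /\ ~ bounded_seq (fun n => ln (xs n i))))
    as [[i [Hi Hunb]]|Hbd].
  { exists i. split; auto.
    destruct (Htri i Hi) as [H|[H|H]];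
      [contradiction|right; apply cv_infty_ln|left; apply cv_infty_opp_ln_cv_0]; auto. }
  exfalso.
  destruct (bounded_seq_uniform_on_list (fun i n => ln (xs n i)) (seq 0 N)) as [B [_ HB]].
  destruct (Hesc (exp B) (exp_pos B)) as [n [i [Hi Hx]]].
  assert (Hln : Rabs (ln (xs n i)) <= B).
  { apply (HB i n); [apply in_seq; lia|]. apply NNPP. intros H. apply Hbd. eauto. }
  apply Rabs_le_bounds in Hln. pose proof (Hpos n i Hi).
  destruct Hx as [Hx|Hx].
  - apply ln_increasing in Hx; [|apply exp_pos]. rewrite ln_exp in Hx. lra.
  - unfold Rdiv in Hx. rewrite Rmult_1_l, <- exp_Ropp in Hx.
    apply ln_increasing in Hx; auto. rewrite ln_exp in Hx. lra.
Qed.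

Theorem mainTheorem4 (N : nat) (Rs : list reaction) (kappa : nat -> R -> R) (eta : R)
  (D : (nat -> R) -> Prop) :
  reaction_network N Rs ->
  weakly_reversible Rs ->
  bounded_kinetics Rs kappa eta ->
  (forall x, D x -> forall i, (i < N)%nat -> 0 < x i) ->
  (exists M, 0 < M /\
     forall x, D x ->
       (exists i, (i < N)%nat /\ (M < x i \/ x i < 1 / M)) ->
       forall t, 0 <= t -> field_dot_ln N Rs kappa x t < 0)
  \/
  (exists xs : nat -> nat -> R,
     (forall n, D (xs n)) /\
     (exists i, (i < N)%nat /\
        (Un_cv (fun n => xs n i) 0 \/ cv_infty (fun n => xs n i))) /\
     exists (P : nat) (T : nat -> complex -> Prop) (Cc : R),
       partitioned_along N Rs xs P T Cc /\
       union_of_linkage_classes Rs (T O)).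
Proof.
  intros Hnet HWR Hkin HD.
  destruct (classic (forall n : nat, exists xt : (nat -> R) * R,
      D (fst xt) /\ escapes N (INR n + 1) (fst xt) /\ 0 <= snd xt /\
      0 <= field_dot_ln N Rs kappa (fst xt) (snd xt))) as [Hbad|Hgood].
  2:{ left. destruct (not_all_ex_not _ _ Hgood) as [n Hn].
      exists (INR n + 1). split; [pose proof (pos_INR n); lra|].
      intros x Dx Hx t Ht. apply Rnot_le_lt. intros Hle. apply Hn. exists (x, t). auto. }
  right. destruct (choice _ Hbad) as [xt Hxt].
  set (x := fun n => fst (xt n)).
  destruct (exists_common_trichotomous_subseq (fun i n => ln (x n i)) (seq 0 N))
    as [p [Hp Hcoord]].
  destruct (exists_common_trichotomous_subseq
    (fun ab n => log_monom N (x (p n)) (fst ab) - log_monom N (x (p n)) (snd ab))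
    (list_prod (complexes Rs) (complexes Rs))) as [q [Hq Hgap]].
  set (r := fun n => p (q n)).
  pose proof (strictly_increasing_comp p q Hp Hq) as Hr.
  assert (Hpos : forall n i, (i < N)%nat -> 0 < x (r n) i)
    by (intros; apply HD; auto; apply Hxt).
  pose proof (escapes_subseq N x r Hr (fun n => proj1 (proj2 (Hxt n)))) as Hesc.
  exists (fun n => x (r n)). split; [intros n; apply Hxt|split].
  - apply divergent_coordinate; auto. intros i Hi.
    apply (trichotomous_subseq (fun n => ln (x (p n) i))); auto. apply Hcoord, in_seq; lia.
  - apply (tiered_partition N Rs _ Hpos kappa eta (fun n => snd (xt (r n)))); auto.
    + intros n; apply Hxt.
    + intros n; apply Hxt.
    + destruct (Hesc 1 Rlt_0_1) as [n [i [Hi _]]]. destruct Hnet as [_ [_ [_ Hspecies]]].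
      destruct (Hspecies i Hi) as [y [Hy _]]. apply is_complex_In in Hy.
      intros E. rewrite E in Hy. destruct Hy.
    + intros a b Ha Hb. exact (Hgap (a, b) (in_prod _ _ _ _ Ha Hb)).
Qed.
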